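(* Let $p\ge 1$, let $\mathbf{S}$ be a real symmetric positive semidefinite $p\times p$ matrix, let $\mathbf{T}$ be a real symmetric positive definite $p\times p$ matrix, and let $\lambda_a\in(0,\infty)$. Consider the penalized log-likelihood $$\mathcal{L}^{p}(\mathbf{\Omega}) = \ln|\mathbf{\Omega}| - \mathrm{tr}(\mathbf{S}\mathbf{\Omega}) - \frac{\lambda_a}{2}\,\mathrm{tr}\big[(\mathbf{\Omega}-\mathbf{T})^{\mathrm{T}}(\mathbf{\Omega}-\mathbf{T})\big]$$ over real symmetric positive definite $p\times p$ matrices $\mathbf{\Omega}$. Then $\mathcal{L}^p$ is maximized by $$\hat{\mathbf{\Omega}}^{\mathrm{I}a}(\lambda_a) = \Big\{\Big[\lambda_a\mathbf{I}_p + \tfrac14(\mathbf{S}-\lambda_a\mathbf{T})^2\Big]^{1/2} + \tfrac12(\mathbf{S}-\lambda_a\mathbf{T})\Big\}^{-1},$$ which is the solution of the stationarity equation $\mathbf{\Omega}^{-1} - (\mathbf{S}-\lambda_a\mathbf{T}) - \lambda_a\mathbf{\Omega} = \mathbf{0}$.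
   Context: $|\cdot|$ denotes the determinant, $\mathbf{I}_p$ the $p\times p$ identity matrix. For a real symmetric positive definite matrix $\mathbf{H}$, $\mathbf{H}^{1/2}$ denotes its unique symmetric positive definite square root. *)

From mathcomp Require Import all_boot all_fingroup.
From Stdlib Require Import Reals.
Set Implicit Arguments. Unset Strict Implicit. Unset Printing Implicit Defensive.
Local Open Scope R_scope.

Definition mat (p : nat) := 'I_p -> 'I_p -> R.

Definition madd p (A B : mat p) : mat p := fun i j => A i j + B i j.
Definition msub p (A B : mat p) : mat p := fun i j => A i j - B i j.
Definition mscale p (c : R) (A : mat p) : mat p := fun i j => c * A i j.
Definition mmul p (A B : mat p) : mat p :=
  fun i j => \big[Rplus/0]_(k < p) (A i k * B k j).
Definition mtr p (A : mat p) : mat p := fun i j => A j i.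
Definition eyem p : mat p := fun i j => if i == j then 1 else 0.
Definition zerom p : mat p := fun _ _ => 0.

Definition trace p (A : mat p) : R := \big[Rplus/0]_(i < p) A i i.

Definition det p (A : mat p) : R :=
  \big[Rplus/0]_(s : 'S_p)
     ((if odd_perm s then -1 else 1) * \big[Rmult/1]_(i < p) A i (s i)).

Definition quad p (A : mat p) (x : 'I_p -> R) : R :=
  \big[Rplus/0]_(i < p) \big[Rplus/0]_(j < p) (x i * A i j * x j).

Definition symmetric p (A : mat p) : Prop := forall i j, A i j = A j i.
Definition psd p (A : mat p) : Prop :=
  symmetric A /\ forall x : 'I_p -> R, 0 <= quad A x.
Definition pd p (A : mat p) : Prop :=
  symmetric A /\ forall x : 'I_p -> R, (exists i, x i <> 0) -> 0 < quad A x.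

Definition is_spd_sqrt p (H X : mat p) : Prop := pd X /\ mmul X X = H.

Definition penloglik p (S T : mat p) (la : R) (Om : mat p) : R :=
  ln (det Om) - trace (mmul S Om)
  - la / 2 * trace (mmul (mtr (msub Om T)) (msub Om T)).

(* The stationarity equation [Om^-1 - (S - la T) - la Om = 0] is solved in the
   functional calculus of the symmetric matrix [D = S - la T]: on each eigenvalue
   [t] of [D], [Om^-1] must be the positive root [s] of [s^2 - t s - la = 0], namely
   [sqrt (la + t^2/4) + t/2].  This root is a maximizer because [L^p] is concave:
   for positive definite [M] and [W], the matrix [M^(1/2) W M^(1/2)] is positive
   definite, so [ln det M + ln det W <= tr (M W) - p] (AM-GM on its eigenvalues,
   i.e. [ln x <= x - 1]).  Applied with [M = Om^-1] this bounds [ln det] by its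
   tangent at [Om], and the quadratic penalty only adds [-la/2 |Om' - Om|^2]. *)

From Pilot Require Import Defs.
From mathcomp Require Import all_boot all_fingroup.
From Stdlib Require Import Reals FunctionalExtensionality.
From HB Require Import structures.
From mathcomp Require Import all_order all_algebra.
From mathcomp Require Import complex spectral sesquilinear.
From mathcomp Require Import Rstruct.
From mathcomp.algebra_tactics Require Import ring lra.
Import Order.TTheory GRing.Theory Num.Theory Num.Def.
Set Implicit Arguments. Unset Strict Implicit. Unset Printing Implicit Defensive.
Local Open Scope ring_scope.

Definition posdefmx (F : numDomainType) n (A : 'M[F]_n) :=
  A^T = A /\ forall x : 'rV[F]_n, x != 0 -> 0 < (x *m A *m x^T) 0 0.

Lemma gram_row_gt0 (F : realDomainType) n (x : 'rV[F]_n) :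
  x != 0 -> 0 < (x *m x^T) 0 0.
Proof.
have sq_ge0 k : 0 <= x 0 k * x^T k 0 by rewrite mxE -expr2 sqr_ge0.
move=> x0; rewrite mxE lt0r sumr_ge0 ?andbT //.
apply: contra x0 => /eqP sum0; apply/eqP/rowP => k.
have /eqP : x 0 k * x^T k 0 = 0 by apply: (psumr_eq0P (fun k _ => sq_ge0 k) sum0).
by rewrite mxE -expr2 sqrf_eq0 mxE => /eqP.
Qed.

Lemma poly_interpolation (F : fieldType) (g : F -> F) (s : seq F) :
  exists q : {poly F}, {in s, forall x, q.[x] = g x}.
Proof.
elim: s => [|y s [q Hq]]; first by exists 0.
have [ys|yNs] := boolP (y \in s).
  by exists q => x; rewrite inE => /orP[/eqP->|]; apply: Hq.
pose P := \prod_(z <- s) ('X - z%:P).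
have Py : P.[y] != 0.
  rewrite horner_prod prodf_seq_neq0; apply/allP => z zs /=.
  by rewrite hornerXsubC subr_eq0; apply: contraNneq yNs => ->.
exists (q + ((g y - q.[y]) / P.[y]) *: P) => x; rewrite inE => /orP[/eqP->|xs].
  by rewrite hornerD hornerZ divfK // addrC subrK.
have Px : P.[x] = 0 by rewrite horner_prod (big_rem x) //= hornerXsubC subrr mul0r.
by rewrite hornerD hornerZ Hq // Px mulr0 addr0.
Qed.

Local Open Scope complex_scope.
Local Open Scope sesquilinear_scope.
Local Notation rc := (real_complex R).
Local Notation mapc A := (map_mx rc A).

Lemma real_complex_real (x : R) : rc x \is Num.real.
Proof. by have <- : 'Re (rc x) = rc x by rewrite -complexRe. Qed.

Lemma conj_real_complex (x : R) : conjC (rc x) = rc x.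
Proof. exact: conj_Creal (real_complex_real x). Qed.

Lemma trmxC_real_complex m n (A : 'M[R]_(m, n)) : (mapc A)^t* = mapc A^T.
Proof. by apply/matrixP=> i j; rewrite !mxE conj_real_complex. Qed.

Section SpectralCalculus.
Variables (n : nat) (U : 'M[R[i]]_n.+1) (d : 'I_n.+1 -> R).
Hypothesis U_unitary : U \is unitarymx.

Definition eigen_diag (g : R -> R) : 'M[R[i]]_n.+1 := diag_mx (\row_i rc (g (d i))).

(* [Y] is [g(A)] for the real symmetric matrix [A] diagonalised by [U] with
   eigenvalues [d], i.e. the one with [is_mxfun A idfun]. *)
Definition is_mxfun (Y : 'M[R]_n.+1) (g : R -> R) := mapc Y = U^t* *m eigen_diag g *m U.

Lemma unitary_mulmxtC : U *m U^t* = 1%:M. Proof. exact/unitarymxP. Qed.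

Lemma unitary_multCmx : U^t* *m U = 1%:M.
Proof. by have := mulmxKtV 1%:M U_unitary erefl; rewrite mul1mx. Qed.

Lemma is_mxfun_inj Y Y' g g' : is_mxfun Y g -> is_mxfun Y' g' ->
  (forall i, g (d i) = g' (d i)) -> Y = Y'.
Proof.
move=> hY hY' e; apply: (map_mx_inj (f := rc)); rewrite hY hY'.
by congr (_ *m diag_mx _ *m _); apply/rowP=> i; rewrite !mxE e.
Qed.

Lemma is_mxfunM Y Y' g g' : is_mxfun Y g -> is_mxfun Y' g' ->
  is_mxfun (Y *m Y') (fun t => g t * g' t).
Proof.
rewrite /is_mxfun map_mxM => -> ->.
rewrite -!mulmxA (mulmxA U) unitary_mulmxtC mul1mx !mulmxA.
rewrite -(mulmxA _ (eigen_diag g)) /eigen_diag mulmx_diag; congr (_ *m diag_mx _ *m _).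
by apply/rowP=> i; rewrite !mxE rmorphM.
Qed.

Lemma is_mxfunD Y Y' g g' : is_mxfun Y g -> is_mxfun Y' g' ->
  is_mxfun (Y + Y') (fun t => g t + g' t).
Proof.
rewrite /is_mxfun map_mxD => -> ->; rewrite -mulmxDl -mulmxDr; congr (_ *m _ *m _).
apply/matrixP=> i j; rewrite !mxE.
by case: (i == j); rewrite ?mulr1n ?mulr0n ?rmorphD ?addr0.
Qed.

Lemma is_mxfunZ Y g c : is_mxfun Y g -> is_mxfun (c *: Y) (fun t => c * g t).
Proof.
rewrite /is_mxfun map_mxZ => ->.
have -> : eigen_diag (fun t => c * g t) = rc c *: eigen_diag g.
  apply/matrixP=> i j; rewrite !mxE.
  by case: (i == j); rewrite ?mulr1n ?mulr0n ?rmorphM ?mulr0.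
by rewrite -scalemxAr -scalemxAl.
Qed.

Lemma is_mxfun1 : is_mxfun 1%:M (fun _ => 1).
Proof.
rewrite /is_mxfun map_mx1 /eigen_diag.
have -> : \row_i rc ((fun _ => 1) (d i)) = const_mx 1 :> 'rV[R[i]]_n.+1.
  by apply/rowP=> i; rewrite !mxE rmorph1.
by rewrite diag_const_mx mulmx1 unitary_multCmx.
Qed.

Lemma is_mxfun_sym Y g : is_mxfun Y g -> Y^T = Y.
Proof.
move=> hY; apply: (map_mx_inj (f := rc)); rewrite -trmxC_real_complex hY.
rewrite !trmx_mul !map_mxM trmxCK /eigen_diag tr_diag_mx mulmxA map_diag_mx.
by congr (_ *m diag_mx _ *m _); apply/rowP=> i; rewrite !mxE; exact: conj_real_complex.
Qed.

Lemma det_mxfun Y g : is_mxfun Y g -> \det Y = \prod_i g (d i).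
Proof.
move=> hY; apply: complexI; rewrite -det_map_mx hY rmorph_prod /=.
rewrite !det_mulmx mulrAC -det_mulmx unitary_multCmx det1 mul1r det_diag.
by apply: eq_bigr => i _; rewrite mxE.
Qed.

Lemma trace_mxfun Y g : is_mxfun Y g -> \tr Y = \sum_i g (d i).
Proof.
move=> hY; apply: complexI; rewrite -trace_map_mx hY rmorph_sum /=.
rewrite mxtrace_mulC mulmxA unitary_mulmxtC mul1mx mxtrace_diag.
by apply: eq_bigr => i _; rewrite mxE.
Qed.

(* [g(A)] is a polynomial in [A]: interpolate [g] on the spectrum. *)
Lemma mxfun_exists A g : is_mxfun A idfun -> exists Y, is_mxfun Y g.
Proof.
move=> hA; have [q Hq] := poly_interpolation g [seq d i | i <- enum 'I_n.+1].
exists (horner_mx A q); rewrite /is_mxfun map_horner_mx hA -invmx_unitary //.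
rewrite horner_mx_uconjC ?unitarymx_unit // horner_mx_diag.
congr (_ *m diag_mx _ *m _); apply/rowP=> i; rewrite !mxE /= horner_map Hq //.
by apply: map_f; rewrite mem_enum.
Qed.

Lemma is_mxfun_posdef Y g : is_mxfun Y g -> (forall i, 0 < g (d i)) -> posdefmx Y.
Proof.
move=> hY g_gt0; split; first exact: is_mxfun_sym hY.
move=> x x0; rewrite -ltcR rmorph0.
have -> : rc ((x *m Y *m x^T) 0 0) = (mapc (x *m Y *m x^T)) 0 0 by rewrite [RHS]mxE.
set v := mapc x *m U^t*.
have -> : mapc (x *m Y *m x^T) = v *m eigen_diag g *m v^t*.
  by rewrite !map_mxM hY -trmxC_real_complex /v !trmx_mul !map_mxM trmxCK !mulmxA.
have v0 : v != 0.
  apply: contra x0 => /eqP v0.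
  have : v *m U = mapc x by rewrite /v -mulmxA unitary_multCmx mulmx1.
  by rewrite v0 mul0mx => /esym/eqP; rewrite map_mx_eq0.
clearbody v.
have /existsP[j vj] : [exists j, v 0 j != 0].
  apply: contraNT v0 => /existsPn v_eq0; apply/eqP/rowP => j; apply/eqP.
  by rewrite mxE; move: (v_eq0 j); rewrite negbK.
have entry k : (v *m eigen_diag g) 0 k * v^t* k 0 = rc (g (d k)) * `|v 0 k| ^+ 2.
  by rewrite mul_mx_diag !mxE normCK mulrAC mulrC.
rewrite mxE (bigD1 j) //= entry ltr_wpDr ?sumr_ge0 // => [k _|].
  by rewrite entry mulr_ge0 ?exprn_ge0 // ler0c ltW.
by rewrite mulr_gt0 ?exprn_gt0 ?normr_gt0 // ltcR.
Qed.

(* A real eigenvector for the eigenvalue [d i] exists because [A - d i] is singular. *)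
Lemma posdef_eigen_gt0 A : is_mxfun A idfun -> posdefmx A -> forall i, 0 < d i.
Proof.
move=> hA [_ A_pos] i.
have hAi := is_mxfunD hA (is_mxfunZ (- d i) is_mxfun1).
have /det0P[x x0 xAi] : \det (A + - d i *: 1%:M) == 0.
  by rewrite (det_mxfun hAi) (bigD1 i) //= mulr1 addrN mul0r.
have xA : x *m A = d i *: x.
  by apply/eqP; rewrite -subr_eq0; move/eqP: xAi; rewrite mulmxDr -scalemxAr mulmx1 scaleNr.
have := A_pos x x0; rewrite xA -scalemxAl mxE.
by rewrite pmulr_lgt0 // gram_row_gt0.
Qed.

End SpectralCalculus.

Lemma symmetric_unitary_diag n (A : 'M[R]_n.+1) : A^T = A ->
  exists U d, U \is unitarymx /\ is_mxfun U d A idfun.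
Proof.
move=> sA; have A_herm : mapc A \is hermsymmx.
  by apply/is_hermitianmxP; rewrite expr0 scale1r trmxC_real_complex sA.
exists (spectralmx (mapc A)), (fun i => complex.Re (spectral_diag (mapc A) 0 i)).
split; first exact: spectral_unitarymx.
have /hermitian_normalmx/orthomx_spectralP AE := A_herm.
rewrite /is_mxfun {1}AE invmx_unitary ?spectral_unitarymx //.
congr (_ *m diag_mx _ *m _); apply/rowP=> i; rewrite mxE complexRe.
apply/esym/Creal_ReP.
by have /mxOverP := hermitian_spectral_diag_real A_herm; apply.
Qed.

Lemma posdefmx_spectral n (A : 'M[R]_n.+1) : posdefmx A ->
  exists U d, [/\ U \is unitarymx, is_mxfun U d A idfun & forall i, 0 < d i].
Proof.
move=> A_pd; have [U [d [U_unitary hA]]] := symmetric_unitary_diag A_pd.1.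
by exists U, d; split=> //; apply: posdef_eigen_gt0 hA A_pd.
Qed.

Lemma posdefmx_det_gt0 n (A : 'M[R]_n.+1) : posdefmx A -> 0 < \det A.
Proof.
move=> /posdefmx_spectral[U [d [U_unitary hA d_gt0]]].
by rewrite (det_mxfun U_unitary hA); apply: prodr_gt0 => i _; apply: d_gt0.
Qed.

Lemma posdefmx_sqrt n (A : 'M[R]_n.+1) : posdefmx A -> exists K, K^T = K /\ K *m K = A.
Proof.
move=> /posdefmx_spectral[U [d [U_unitary hA d_gt0]]].
have [K hK] := mxfun_exists U_unitary Num.sqrt hA.
exists K; split; first exact: is_mxfun_sym hK.
apply: is_mxfun_inj (is_mxfunM U_unitary hK hK) hA _ => i /=.
by rewrite -expr2 sqr_sqrtr // ltW.
Qed.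

Lemma posdefmx_congr n (K W : 'M[R]_n) : posdefmx W -> K^T = K -> K \in unitmx ->
  posdefmx (K *m W *m K).
Proof.
move=> [sW W_pos] sK K_unit; split; first by rewrite !trmx_mul sK sW mulmxA.
move=> x x0; have -> : x *m (K *m W *m K) *m x^T = x *m K *m W *m (x *m K)^T.
  by rewrite trmx_mul sK !mulmxA.
apply: W_pos; apply: contra x0 => /eqP xK0.
by rewrite -(mulmxK K_unit x) xK0 mul0mx.
Qed.

Local Close Scope sesquilinear_scope.
Local Close Scope complex_scope.

Lemma ln_ler (x y : R) : 0 < x -> x <= y -> ln x <= ln y.
Proof.
move=> x_gt0; rewrite le_eqVlt => /predU1P[->//|xy].
by apply/ltW/RltP/ln_increasing; apply/RltP.
Qed.

Lemma prod_le_exp_sum k (e : 'I_k -> R) : (forall i, 0 <= e i) ->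
  \prod_i e i <= exp (\sum_i (e i - 1)).
Proof.
move=> e_ge0; rewrite (big_morph _ (fun x y => esym (expRD x y)) expR0).
apply: ler_prod => i _; rewrite e_ge0 /=.
by have /RleP := exp_ineq1_le (e i - 1); rewrite !RealsE addrC subrK.
Qed.

Lemma ln_det_le_trace n (A : 'M[R]_n.+1) : posdefmx A -> ln (\det A) <= \tr A - n.+1%:R.
Proof.
move=> /posdefmx_spectral[U [d [U_unitary hA d_gt0]]].
rewrite (det_mxfun U_unitary hA) (trace_mxfun U_unitary hA).
have -> : \sum_i d i - n.+1%:R = \sum_i (d i - 1).
  by rewrite sumrB sumr_const card_ord.
rewrite -[leRHS]ln_exp; apply: ln_ler; first by apply: prodr_gt0 => i _; apply: d_gt0.
by apply: prod_le_exp_sum => i; apply/ltW/d_gt0.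
Qed.

(* Conjugating by [K = M^(1/2)] reduces the inequality to [ln_det_le_trace]. *)
Lemma ln_det_mul_le_trace n (M W : 'M[R]_n.+1) : posdefmx M -> posdefmx W ->
  ln (\det M) + ln (\det W) <= \tr (M *m W) - n.+1%:R.
Proof.
move=> M_pd W_pd; have [K [sK KK]] := posdefmx_sqrt M_pd.
have K_unit : K \in unitmx.
  rewrite unitmxE unitfE; apply: contraTneq (posdefmx_det_gt0 M_pd) => detK0.
  by rewrite -KK det_mulmx detK0 mul0r ltxx.
have := ln_det_le_trace (posdefmx_congr W_pd sK K_unit).
rewrite !det_mulmx mulrAC -det_mulmx KK mxtrace_mulC mulmxA KK.
rewrite ln_mult //; apply/RltP; exact: posdefmx_det_gt0.
Qed.

Lemma trace_gram_ge0 (F : realDomainType) m n (B : 'M[F]_(m, n)) : 0 <= \tr (B^T *m B).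
Proof.
apply: sumr_ge0 => i _; rewrite mxE; apply: sumr_ge0 => k _.
by rewrite mxE -expr2 sqr_ge0.
Qed.

Lemma trace_gram_addl (F : comPzRingType) n (A B : 'M[F]_n) : A^T = A ->
  \tr ((A + B)^T *m (A + B)) = \tr (A^T *m A) + \tr (A *m B) *+ 2 + \tr (B^T *m B).
Proof.
move=> sA; have -> : (A + B)^T = A + B^T by rewrite linearD /= sA.
rewrite mulmxDl !mulmxDr !mxtraceD -(mxtrace_tr (B^T *m A)) trmx_mul trmxK sA.
by rewrite mulr2n !addrA.
Qed.

Definition penloglikmx n (S T : 'M[R]_n) (la : R) (Om : 'M[R]_n) : R :=
  ln (\det Om) - \tr (S *m Om) - la / 2 * \tr ((Om - T)^T *m (Om - T)).

(* [ln_det_mul_le_trace] bounds [ln det] by its tangent at [Om = M^-1];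
   stationarity makes the linear terms cancel against those of the penalty. *)
Lemma penloglikmx_stationary_max n (S T M Om : 'M[R]_n.+1) (la : R) :
  0 <= la -> T^T = T -> Om^T = Om -> posdefmx M -> M *m Om = 1%:M ->
  M = S + la *: (Om - T) ->
  forall Om', posdefmx Om' -> penloglikmx S T la Om' <= penloglikmx S T la Om.
Proof.
move=> la_ge0 sT sOm M_pd MOm stat Om' Om'_pd.
set A := Om - T; set E := Om' - Om.
have sA : A^T = A by rewrite /A linearB /= sOm sT.
have detM_gt0 := posdefmx_det_gt0 M_pd.
have ln_detOm : ln (\det Om) = - ln (\det M).
  have -> : \det Om = (\det M)^-1.
    by apply: (mulfI (lt0r_neq0 detM_gt0)); rewrite -det_mulmx MOm det1 mulfV ?lt0r_neq0.
  by rewrite -RinvE ln_Rinv //; apply/RltP.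
have trMOm' : \tr (M *m Om') = n.+1%:R + \tr (S *m E) + la * \tr (A *m E).
  rewrite -[Om'](subrK Om) -/E mulmxDr mxtraceD MOm mxtrace1 {1}stat mulmxDl mxtraceD.
  by rewrite -scalemxAl mxtraceZ addrC addrA.
have trSOm' : \tr (S *m Om') = \tr (S *m Om) + \tr (S *m E).
  by rewrite -[Om'](subrK Om) -/E mulmxDr mxtraceD addrC.
have gramOm' : \tr ((Om' - T)^T *m (Om' - T)) =
    \tr (A^T *m A) + \tr (A *m E) *+ 2 + \tr (E^T *m E).
  have -> : Om' - T = A + E by rewrite /A /E [RHS]addrC addrA subrK.
  exact: trace_gram_addl.
have le_tangent : ln (\det M) + ln (\det Om') <= \tr (M *m Om') - n.+1%:R.
  exact: ln_det_mul_le_trace.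
have penalty_ge0 : 0 <= la / 2 * \tr (E^T *m E).
  by rewrite mulr_ge0 ?divr_ge0 ?ler0n ?trace_gram_ge0.
have penloglikmxE V : penloglikmx S T la V =
    ln (\det V) - \tr (S *m V) - la / 2 * \tr ((V - T)^T *m (V - T)) by [].
rewrite !penloglikmxE ln_detOm trSOm' gramOm' -/A; rewrite trMOm' in le_tangent.
lra.
Qed.

Lemma quarter_disc_gt0 (F : realFieldType) (la t : F) : 0 < la -> 0 < la + 1/4 * (t * t).
Proof. have := sqr_ge0 t; rewrite expr2; lra. Qed.

Lemma sqr_sqrt_quarter (F : rcfType) (la t : F) : 0 < la ->
  Num.sqrt (la + 1/4 * (t * t)) * Num.sqrt (la + 1/4 * (t * t)) = la + 1/4 * (t * t).
Proof. by move=> la_gt0; rewrite -expr2 sqr_sqrtr // ltW ?quarter_disc_gt0. Qed.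

(* [s = sqrt (la + t^2/4) + t/2] is the positive root of [s^2 - t s - la]. *)
Lemma quad_root_gt0 (F : rcfType) (la t : F) : 0 < la ->
  0 < Num.sqrt (la + 1/4 * (t * t)) + 1/2 * t.
Proof.
move=> la_gt0; have abs_lt : `|1/2 * t| < Num.sqrt (la + 1/4 * (t * t)).
  rewrite -sqrtr_sqr ltr_sqrt ?quarter_disc_gt0 //.
  have -> : (1/2 * t) ^+ 2 = 1/4 * (t * t) by field.
  by rewrite ltr_pwDl.
by rewrite -ltrBlDr sub0r; apply: le_lt_trans abs_lt; rewrite -normrN ler_norm.
Qed.

Lemma quad_root_stationary (F : rcfType) (la t : F) : 0 < la ->
  let s := Num.sqrt (la + 1/4 * (t * t)) + 1/2 * t in s - t = la * s^-1.
Proof.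
move=> la_gt0 s; have s_neq0 : s != 0 by rewrite gt_eqF ?quad_root_gt0.
apply: (mulIf s_neq0); rewrite mulfVK //.
have := sqr_sqrt_quarter t la_gt0; rewrite /s; set r := Num.sqrt _ => rr; lra.
Qed.

Lemma penloglikmx_stationary_point n (S T : 'M[R]_n.+1) (la : R) :
  S^T = S -> T^T = T -> 0 < la ->
  let D := S - la *: T in
  exists X Om : 'M[R]_n.+1, let M := X + 1/2 *: D in
    [/\ posdefmx X, X *m X = la *: 1%:M + 1/4 *: (D *m D),
        Om *m M = 1%:M, M *m Om = 1%:M &
        [/\ posdefmx Om, posdefmx M & M - D - la *: Om = 0]].
Proof.
move=> sS sT la_gt0 D.
have sD : D^T = D by rewrite /D linearB linearZ /= sS sT.
have [U [d [U_unitary hD]]] := symmetric_unitary_diag sD.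
pose r t := Num.sqrt (la + 1/4 * (t * t)).
have s_gt0 t : 0 < r t + 1/2 * t := quad_root_gt0 t la_gt0.
have [X hX] := mxfun_exists U_unitary r hD.
have [Om hOm] := mxfun_exists U_unitary (fun t => (r t + 1/2 * t)^-1) hD.
have hM := is_mxfunD hX (is_mxfunZ (1/2) hD).
have h1 := is_mxfun1 d U_unitary.
exists X, Om => M; split.
- by apply: (is_mxfun_posdef U_unitary hX) => i; rewrite sqrtr_gt0 quarter_disc_gt0.
- apply: is_mxfun_inj (is_mxfunM U_unitary hX hX)
    (is_mxfunD (is_mxfunZ la h1) (is_mxfunZ (1/4) (is_mxfunM U_unitary hD hD))) _ => i /=.
  by rewrite sqr_sqrt_quarter // mulr1.
- apply: is_mxfun_inj (is_mxfunM U_unitary hOm hM) h1 _ => i /=.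
  by rewrite mulVf ?gt_eqF.
- apply: is_mxfun_inj (is_mxfunM U_unitary hM hOm) h1 _ => i /=.
  by rewrite mulfV ?gt_eqF.
split.
- by apply: (is_mxfun_posdef U_unitary hOm) => i; rewrite invr_gt0.
- by apply: (is_mxfun_posdef U_unitary hM) => i; apply: s_gt0.
apply/eqP; rewrite subr_eq0 -scaleN1r; apply/eqP.
apply: is_mxfun_inj (is_mxfunD hM (is_mxfunZ (-1) hD)) (is_mxfunZ la hOm) _ => i /=.
by rewrite mulN1r; apply: quad_root_stationary.
Qed.

Theorem penloglikmx_maximizer n (S T : 'M[R]_n.+1) (la : R) :
  S^T = S -> T^T = T -> 0 < la ->
  let D := S - la *: T in
  exists X Om : 'M[R]_n.+1, let M := X + 1/2 *: D in
    [/\ posdefmx X /\ X *m X = la *: 1%:M + 1/4 *: (D *m D),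
        Om *m M = 1%:M /\ M *m Om = 1%:M, posdefmx Om, M - D - la *: Om = 0 &
        forall Om', posdefmx Om' -> penloglikmx S T la Om' <= penloglikmx S T la Om].
Proof.
move=> sS sT la_gt0 D.
have [X [Om [X_pd XX OmM MOm [Om_pd M_pd stat]]]] := penloglikmx_stationary_point sS sT la_gt0.
exists X, Om => M; split=> //.
apply: penloglikmx_stationary_max (ltW la_gt0) sT Om_pd.1 M_pd MOm _.
apply/eqP; rewrite -subr_eq0 -[X in _ == X]stat /D scalerBr.
by apply/eqP/matrixP => i j; rewrite !mxE; ring.
Qed.

Section MatrixTransfer.
Variable p : nat.
Implicit Types (A B : mat p) (M : 'M[R]_p).

Definition mx_of A : 'M[R]_p := \matrix_(i, j) A i j.
Definition mat_of M : mat p := fun i j => M i j.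

Lemma mat_ofK : cancel mat_of mx_of.
Proof. by move=> M; apply/matrixP=> i j; rewrite mxE. Qed.

Lemma mx_of_inj : injective mx_of.
Proof.
move=> A B /matrixP eqAB; apply: functional_extensionality => i.
by apply: functional_extensionality => j; have := eqAB i j; rewrite !mxE.
Qed.

Lemma mx_of_mmul A B : mx_of (mmul A B) = mx_of A *m mx_of B.
Proof. by apply/matrixP=> i j; rewrite !mxE; apply: eq_bigr => k _; rewrite !mxE. Qed.

Lemma mx_of_madd A B : mx_of (madd A B) = mx_of A + mx_of B.
Proof. by apply/matrixP=> i j; rewrite !mxE. Qed.

Lemma mx_of_msub A B : mx_of (msub A B) = mx_of A - mx_of B.
Proof. by apply/matrixP=> i j; rewrite !mxE. Qed.

Lemma mx_of_mscale c A : mx_of (mscale c A) = c *: mx_of A.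
Proof. by apply/matrixP=> i j; rewrite !mxE. Qed.

Lemma mx_of_mtr A : mx_of (mtr A) = (mx_of A)^T.
Proof. by apply/matrixP=> i j; rewrite !mxE. Qed.

Lemma mx_of_eyem : mx_of (@eyem p) = 1%:M.
Proof. by apply/matrixP=> i j; rewrite !mxE /eyem; case: (i == j). Qed.

Lemma mx_of_zerom : mx_of (@zerom p) = 0.
Proof. by apply/matrixP=> i j; rewrite !mxE. Qed.

Lemma trace_mx_of A : trace A = \tr (mx_of A).
Proof. by apply: eq_bigr => i _; rewrite mxE. Qed.

Lemma det_mx_of A : det A = \det (mx_of A).
Proof.
apply: eq_bigr => s _; congr (_ * _); first by case: (odd_perm s).
by apply: eq_bigr => i _; rewrite mxE.
Qed.

Lemma symmetric_mx_of A : Defs.symmetric A -> (mx_of A)^T = mx_of A.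
Proof. by move=> sA; apply/matrixP=> i j; rewrite !mxE sA. Qed.

Lemma quad_mx_of A x : quad A x = ((\row_i x i) *m mx_of A *m (\row_i x i)^T) 0 0.
Proof.
rewrite /quad mxE exchange_big; apply: eq_bigr => j _.
by rewrite !mxE mulr_suml; apply: eq_bigr => i _; rewrite !mxE.
Qed.

Lemma pd_posdefmx A : pd A <-> posdefmx (mx_of A).
Proof.
split=> [[sA A_pos]|[sA A_pos]].
  split=> [|x x0]; first exact: symmetric_mx_of.
  have [i xi] : exists i, x 0 i != 0.
    by apply/existsP; apply: contraNT x0 => /existsPn x_eq0; apply/eqP/rowP => i;
       rewrite mxE; move: (x_eq0 i); rewrite negbK => /eqP.
  have /RltP := A_pos (fun i => x 0 i) (ex_intro _ i (elimN eqP xi)).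
  by rewrite quad_mx_of (_ : \row_i x 0 i = x) //; apply/rowP=> j; rewrite mxE.
split=> [i j|x [i xi]]; first by move/matrixP/(_ j i): sA; rewrite !mxE.
apply/RltP; rewrite quad_mx_of A_pos //.
by apply/eqP => /matrixP/(_ 0 i); rewrite !mxE.
Qed.

Lemma penloglik_mx_of S T la A :
  penloglik S T la A = penloglikmx (mx_of S) (mx_of T) la (mx_of A).
Proof.
by rewrite /penloglikmx -mx_of_msub -mx_of_mtr -!mx_of_mmul -!trace_mx_of -det_mx_of.
Qed.

End MatrixTransfer.

(* The Stdlib numeral [2] is convertible to [2%:R], but [4] is not. *)
Lemma IZR4E : IZR 4 = 4%:R :> R.
Proof. by rewrite IZRposE INRE. Qed.

Local Open Scope R_scope.

Theorem lemma1 (p : nat) (S T : mat p) (la : R) :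
  (1 <= p)%nat -> psd S -> pd T -> 0 < la ->
  exists (X Om : mat p),
    let D := msub S (mscale la T) in
    let M := madd X (mscale (1/2) D) in
    is_spd_sqrt (madd (mscale la (@eyem p)) (mscale (1/4) (mmul D D))) X /\
    mmul Om M = @eyem p /\ mmul M Om = @eyem p /\
    pd Om /\
    msub (msub M D) (mscale la Om) = @zerom p /\
    (forall Om' : mat p, pd Om' -> penloglik S T la Om' <= penloglik S T la Om).
Proof.
case: p S T => [//|n] S T _ [sS _] [sT _] /RltP la_gt0.
have [X [Om [[X_pd XX] [OmM MOm] Om_pd stat Om_max]]] :=
  penloglikmx_maximizer (symmetric_mx_of sS) (symmetric_mx_of sT) la_gt0.
exists (mat_of X), (mat_of Om) => D M.
have eD : mx_of D = (mx_of S - la *: mx_of T)%R by rewrite mx_of_msub mx_of_mscale.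
have eM : mx_of M = (X + 1/2 *: (mx_of S - la *: mx_of T))%R.
  by rewrite mx_of_madd mx_of_mscale mat_ofK eD.
split; [split|split; [|split; [|split; [|split]]]].
- by apply/pd_posdefmx; rewrite mat_ofK.
- apply: mx_of_inj; rewrite mx_of_mmul mat_ofK XX mx_of_madd !mx_of_mscale.
  by rewrite mx_of_eyem mx_of_mmul eD IZR4E.
- by apply: mx_of_inj; rewrite mx_of_mmul mat_ofK eM OmM mx_of_eyem.
- by apply: mx_of_inj; rewrite mx_of_mmul mat_ofK eM MOm mx_of_eyem.
- by apply/pd_posdefmx; rewrite mat_ofK.
- apply: mx_of_inj; rewrite mx_of_msub mx_of_msub mx_of_mscale mat_ofK eM eD.
  by rewrite mx_of_zerom.
- move=> W /pd_posdefmx W_pd; rewrite !penloglik_mx_of mat_ofK.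
  by apply/RleP; exact: Om_max.
Qed.
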